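(* Let $\Gamma$ be a semisimple graph structure with transition matrix $M$ of spectral radius $\lambda>1$ and initial vertex $v_0$ of large growth. Let $\rho_i=\lim_n e_i^TM^n\mathbf 1/\lambda^n$, $u_i=\lim_n e_0^TM^ne_i/\lambda^n$, and let $\mathbb P$ be the Markov measure on infinite paths with initial probabilities $\pi_i=u_i\rho_i/\rho_0$ and transition probability $\rho_j/(\lambda\rho_i)$ on each edge from $v_i$ to $v_j$; let $\mathbb P_m$ be the law of the first $m$ edges. For each $n$, choose a path $\gamma$ of length $n$ starting at $v_0$ uniformly at random and let $\tilde\lambda_n$ be the law of its subpath from position $\lfloor\log n\rfloor$ to position $n-\lfloor\log n\rfloor$. Then $\|\mathbb P_{n-2\lfloor\log n\rfloor}-\tilde\lambda_n\|_{TV}\to0$ as $n\to\infty$.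
   Context: $\Gamma$ is a finite directed graph with transition matrix $M$ ($M_{ij}$ the number of edges $v_i\to v_j$), so $e_i^TM^ne_j$ counts paths of length $n$ from $v_i$ to $v_j$; $\mathbf 1$ is the all-ones vector. $M$ is semisimple if every eigenvalue of modulus $\lambda$ has equal geometric and algebraic multiplicity and $\lambda$ is the only eigenvalue of maximal modulus (so $\lim M^n/\lambda^n$ exists). A vertex $v$ has large growth if the number of paths of length $n$ starting at $v$ grows like $\lambda^{n+o(n)}$. *)

From HB Require Import structures.
From mathcomp Require Import all_boot all_order all_algebra.
From mathcomp Require Import complex.
From mathcomp Require Import all_classical all_reals all_analysis.
Set Implicit Arguments. Unset Strict Implicit. Unset Printing Implicit Defensive.
Import Order.TTheory GRing.Theory Num.Theory numFieldNormedType.Exports.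
Local Open Scope classical_set_scope.
Local Open Scope ring_scope.

(** A finite directed multigraph: vertices 'I_k, a finite type of edges E,
    source and target maps. *)

Definition trans_mx (k : nat) (E : finType) (src tgt : E -> 'I_k) : 'M[nat]_k :=
  \matrix_(i, j) #|[set e : E | (src e == i) && (tgt e == j)]|.

Definition trans_mxR (R : pzRingType) (k : nat) (E : finType)
  (src tgt : E -> 'I_k) : 'M[R]_k :=
  map_mx (fun n : nat => n%:R) (trans_mx src tgt).

Definition ceigen (R : rcfType) (k : nat) (A : 'M[R[i]]_k) (mu : R[i]) : bool :=
  eigenvalue A mu.
Definition alg_mult (R : rcfType) (k : nat) (A : 'M[R[i]]_k) (mu : R[i]) : nat :=
  mup mu (char_poly A).
Definition geom_mult (R : rcfType) (k : nat) (A : 'M[R[i]]_k) (mu : R[i]) : nat :=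
  \rank (eigenspace A mu).

Definition spectral_radius (R : rcfType) (k : nat) (A : 'M[R]_k) (lam : R) : Prop :=
  let AC := map_mx (fun x : R => real_complex R x) A in
  (exists2 mu, ceigen AC mu & `|mu| = real_complex R lam) /\
  (forall mu, ceigen AC mu -> `|mu| <= real_complex R lam).

Definition semisimple (R : rcfType) (k : nat) (A : 'M[R]_k) (lam : R) : Prop :=
  let AC := map_mx (fun x : R => real_complex R x) A in
  spectral_radius A lam /\
  (forall mu, ceigen AC mu -> `|mu| = real_complex R lam ->
     geom_mult AC mu = alg_mult AC mu) /\
  (forall mu, ceigen AC mu -> `|mu| = real_complex R lam -> mu = real_complex R lam).

Definition is_path (k : nat) (E : finType) (src tgt : E -> 'I_k) (s : seq E) : bool :=
  match s with
  | [::] => true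
  | e :: s' => path (fun a b => tgt a == src b) e s'
  end.

Definition starts_at (k : nat) (E : finType) (src : E -> 'I_k) (v : 'I_k) (s : seq E) : bool :=
  match s with [::] => true | e :: _ => src e == v end.

Definition paths_from (k : nat) (E : finType) (src tgt : E -> 'I_k) (v : 'I_k) (n : nat)
  : {set n.-tuple E} :=
  [set g : n.-tuple E | is_path src tgt g && starts_at src v g].

Definition large_growth (R : realType) (k : nat) (E : finType) (src tgt : E -> 'I_k)
  (lam : R) (v : 'I_k) : Prop :=
  exists f : nat -> R,
    (fun n => f n / n%:R) @ \oo --> (0 : R) /\
    (\forall n \near \oo, (#|paths_from src tgt v n|)%:R = lam `^ (n%:R + f n)).

Definition markov_law (R : realType) (k : nat) (E : finType) (src tgt : E -> 'I_k)
  (lam : R) (pi rho : 'I_k -> R) (m : nat) (w : m.-tuple E) : R :=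
  if is_path src tgt w then
    (match tval w with [::] => 1 | e :: _ => pi (src e) end) *
    \prod_(e <- tval w) (rho (tgt e) / (lam * rho (src e)))
  else 0.

Definition subpath_law (R : realType) (k : nat) (E : finType) (src tgt : E -> 'I_k)
  (v : 'I_k) (n a : nat) (w : (n - 2 * a).-tuple E) : R :=
  (#|[set g in paths_from src tgt v n | take (n - 2 * a) (drop a (tval g)) == tval w]|)%:R
  / (#|paths_from src tgt v n|)%:R.

Definition tv_dist (R : realType) (T : finType) (p q : T -> R) : R :=
  \big[Num.max/0]_(A : {set T}) `|\sum_(x in A) p x - \sum_(x in A) q x|.

Definition floor_log (R : realType) (n : nat) : nat := Num.truncn (ln (n%:R : R)).

From HB Require Import structures.
From mathcomp Require Import all_boot all_order all_algebra.
From mathcomp Require Import complex.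
From mathcomp Require Import all_classical all_reals all_analysis.
From mathcomp Require Import ring lra zify.
Import Order.TTheory GRing.Theory Num.Theory numFieldNormedType.Exports.
Set Implicit Arguments. Unset Strict Implicit. Unset Printing Implicit Defensive.
Local Open Scope classical_set_scope.
Local Open Scope ring_scope.

(** Powers of the transition matrix count walks ([walk_sum], [mx_walk_sum]).
    The number of paths of length [a + m + a] from [v0] whose middle segment
    is a fixed path [w] from [s] to [t] factors as (walks of length [a] from
    [v0] to [s]) times (walks of length [a] from [t]) ([card_subpaths]).
    Since [rho] is a nonnegative eigenvector for [lam] ([rho_eigen]), the
    Markov weight of [w] telescopes to [u_s rho_t / (rho_v0 lam^m)]
    ([markov_law_endpoints]).  So on every path the two laws differ by at
    most [discrepancy n a / lam^m], where [discrepancy] sums over [s, t] the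
    gap between [u_s rho_t / rho_v0] and its finite-[n] approximation; summing
    over the paths of length [m] bounds the total variation by [discrepancy]
    times a bounded normalized path count ([tv_le_discrepancy]).  For
    [a = floor_log n -> oo] every gap vanishes once [rho_v0 <> 0]
    ([discrepancy_cvg0]), and [rho_v0 <> 0] follows from large growth: the
    zero set of [rho] is closed under edges and walks inside it grow at a rate
    strictly below [lam] by submultiplicativity ([zero_set_decay],
    [rho_start_neq0]).  Semisimplicity is only needed in the paper to ensure
    the limits defining [rho] and [u]; here these limits are hypotheses. *)

Definition sum_tuples (V : nmodType) (E : finType) (n : nat) (F : seq E -> V) : V :=
  \sum_(g : n.-tuple E) F g.

Section SumTuples.
Variables (V : nmodType) (E : finType).
Implicit Types (F G : seq E -> V).

Lemma sum_tuples0 F : sum_tuples 0 F = F [::].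
Proof. by rewrite /sum_tuples (big_pred1 [tuple]) // => g; apply/esym/eqP/tuple0. Qed.

Lemma sum_tuplesS n F :
  sum_tuples n.+1 F = \sum_(e : E) sum_tuples n (fun s => F (e :: s)).
Proof.
rewrite /sum_tuples pair_big /=.
rewrite (reindex (fun p : E * n.-tuple E => [tuple of p.1 :: p.2])) //=.
exists (fun t : n.+1.-tuple E => (thead t, [tuple of behead t])).
  by move=> [e t] _ /=; congr pair; apply: val_inj.
by move=> [[|x s] //= size_s] _; apply: val_inj.
Qed.

Lemma sum_tuples_cat a b F :
  sum_tuples (a + b) F = sum_tuples a (fun s1 => sum_tuples b (fun s2 => F (s1 ++ s2))).
Proof.
elim: a F => [|a IH] F; first by rewrite sum_tuples0.
by rewrite addSn !sum_tuplesS; apply: eq_bigr => e _; apply: IH.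
Qed.

Lemma eq_sum_tuples n F G :
  (forall s, size s = n -> F s = G s) -> sum_tuples n F = sum_tuples n G.
Proof. by move=> FG; apply: eq_bigr => g _; apply: FG; rewrite size_tuple. Qed.

Lemma sum_tuples_eq0 n F : (forall s, size s = n -> F s = 0) -> sum_tuples n F = 0.
Proof. by move=> F0; rewrite /sum_tuples big1 // => g _; rewrite F0 ?size_tuple. Qed.

Lemma sum_tuples_delta n F (w : seq E) :
  size w = n -> sum_tuples n (fun s => if s == w then F s else 0) = F w.
Proof.
elim: n F w => [|n IH] F [|e w] //=; first by rewrite sum_tuples0 eqxx.
case=> size_w; rewrite sum_tuplesS (bigD1 e) //= big1 ?addr0 => [|e' ne'].
  rewrite -(IH (fun s => F (e :: s)) w size_w); apply: eq_sum_tuples => s _.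
  by rewrite eqseq_cons eqxx.
by apply: sum_tuples_eq0 => s _; rewrite eqseq_cons (negbTE ne').
Qed.

End SumTuples.

Fixpoint walk_from (k : nat) (E : finType) (src tgt : E -> 'I_k) (i : 'I_k) (s : seq E)
  : bool :=
  if s is e :: s' then (src e == i) && walk_from src tgt (tgt e) s' else true.

Fixpoint walk_end (k : nat) (E : finType) (tgt : E -> 'I_k) (i : 'I_k) (s : seq E)
  : 'I_k :=
  if s is e :: s' then walk_end tgt (tgt e) s' else i.

Definition walk_sum (R : pzSemiRingType) (k : nat) (E : finType) (src tgt : E -> 'I_k)
  (n : nat) (i : 'I_k) (h : 'I_k -> R) : R :=
  sum_tuples n (fun s => if walk_from src tgt i s then h (walk_end tgt i s) else 0).

Section Walks.
Variables (k : nat) (E : finType) (src tgt : E -> 'I_k).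
Local Notation walk_from := (walk_from src tgt).
Local Notation walk_end := (walk_end tgt).

Lemma walk_from_cat i s1 s2 :
  walk_from i (s1 ++ s2) = walk_from i s1 && walk_from (walk_end i s1) s2.
Proof. by elim: s1 i => [|e s IH] i //=; rewrite IH andbA. Qed.

Lemma walk_end_cat i s1 s2 : walk_end i (s1 ++ s2) = walk_end (walk_end i s1) s2.
Proof. by elim: s1 i => [|e s IH] i //=. Qed.

Lemma walk_from_cons i e s :
  walk_from i (e :: s) = (src e == i) && is_path src tgt (e :: s).
Proof.
rewrite /=; congr (_ && _); elim: s e => [|e' s IH] e //=.
by rewrite IH eq_sym.
Qed.

Lemma paths_from_walk v n (g : n.-tuple E) :
  (g \in paths_from src tgt v n) = walk_from v g.
Proof.
by rewrite inE; case: g => [[|e s] size_s] //; rewrite walk_from_cons andbC.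
Qed.

Lemma walk_end_closed (P : pred 'I_k) :
  (forall e, P (src e) -> P (tgt e)) ->
  forall s i, walk_from i s -> P i -> P (walk_end i s).
Proof.
move=> closedP; elim=> [|e s IH] i //= /andP[/eqP <- walk_s] Pi.
by apply: IH => //; apply: closedP.
Qed.

End Walks.

Section WalkSums.
Variables (k : nat) (E : finType) (src tgt : E -> 'I_k).
Local Notation walk_from := (walk_from src tgt).
Local Notation walk_end := (walk_end tgt).
Local Notation walk_sum := (walk_sum src tgt).

Lemma walk_sumS (R : pzSemiRingType) n i (h : 'I_k -> R) :
  walk_sum n.+1 i h = \sum_(e | src e == i) walk_sum n (tgt e) h.
Proof.
rewrite /walk_sum sum_tuplesS [RHS]big_mkcond; apply: eq_bigr => e _ /=.
by case: (src e == i); last by rewrite sum_tuples_eq0.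
Qed.

Lemma walk_sum_cat (R : pzSemiRingType) N n i (h : 'I_k -> R) :
  walk_sum (N + n) i h =
  sum_tuples N (fun s => if walk_from i s then walk_sum n (walk_end i s) h else 0).
Proof.
rewrite /walk_sum sum_tuples_cat; apply: eq_sum_tuples => s1 _.
case walk_s1: (walk_from i s1); last first.
  by apply: sum_tuples_eq0 => s2 _; rewrite walk_from_cat walk_s1.
by apply: eq_sum_tuples => s2 _; rewrite walk_from_cat walk_s1 walk_end_cat.
Qed.

Lemma walk_sum_ge0 (R : numDomainType) n i (h : 'I_k -> R) :
  (forall j, 0 <= h j) -> 0 <= walk_sum n i h.
Proof. by move=> h_ge0; apply: sumr_ge0 => g _; case: ifP. Qed.

(** Walks from a vertex set [P] closed under edges: after [N] steps a walk is
    still in [P], so the count of walks of length [N + n] is at most the count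
    of length [N] times the total count of length [n] from [P]. *)
Lemma walk_sum_submul (R : numDomainType) (P : pred 'I_k) N n i :
  (forall e, P (src e) -> P (tgt e)) -> P i ->
  walk_sum (N + n) i (fun _ => 1) <=
  walk_sum N i (fun _ => 1) * \sum_(j | P j) walk_sum n j (fun _ => 1 : R).
Proof.
move=> closedP Pi; rewrite walk_sum_cat /walk_sum /sum_tuples mulr_suml.
apply: ler_sum => s _; case walk_s: (walk_from i s); last by rewrite mul0r.
rewrite mul1r (bigD1 (walk_end i s)) ?(walk_end_closed closedP) //= lerDl.
by apply: sumr_ge0 => j _; apply: sumr_ge0 => g _; case: walk_from.
Qed.

Lemma mx_walk_sum (R : pzRingType) n p (B : 'M[R]_(k, p)) i c :
  (trans_mxR R src tgt ^+ n *m B) i c = walk_sum n i (fun j => B j c).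
Proof.
elim: n i => [|n IH] i; first by rewrite expr0 mul1mx /walk_sum sum_tuples0.
rewrite exprS -mulmxE -mulmxA mxE walk_sumS (partition_big tgt predT) //=.
apply: eq_bigr => j _; rewrite IH /trans_mxR /trans_mx !mxE.
rewrite (eq_bigr (fun _ => walk_sum n j (B^~ c))) => [|e /andP[_ /eqP -> //]].
rewrite sumr_const mulr_natl; congr (_ *+ _).
by apply: eq_card => e; rewrite !unfold_in /= ?asboolb.
Qed.

Lemma mx_row_sum_walk (R : pzRingType) n i :
  (trans_mxR R src tgt ^+ n *m (const_mx 1 : 'M[R]_(k, 1))) i ord0 =
  walk_sum n i (fun _ => 1 : R).
Proof. by rewrite mx_walk_sum; congr walk_sum; apply: funext => j; rewrite mxE. Qed.

Lemma mx_entry_walk (R : pzRingType) n i j :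
  (trans_mxR R src tgt ^+ n) i j = walk_sum n i (fun l => (l == j)%:R : R).
Proof.
by rewrite -[_ ^+ n]mulmx1 mx_walk_sum; congr walk_sum; apply: funext => l; rewrite mxE.
Qed.

Lemma card_paths_from (R : pzSemiRingType) v n :
  (#|paths_from src tgt v n|)%:R = walk_sum n v (fun _ => 1) :> R.
Proof.
rewrite -sumr_const big_mkcond /walk_sum /sum_tuples; apply: eq_bigr => g _.
by rewrite paths_from_walk.
Qed.

Lemma card_subpaths (R : pzSemiRingType) v n m a (w : seq E) e w' :
  n = (a + (m + a))%N -> size w = m -> w = e :: w' ->
  (#|[set g in paths_from src tgt v n | take m (drop a (tval g)) == w]|)%:R =
  (if is_path src tgt w then
     walk_sum a v (fun j => (j == src e)%:R) * walk_sum a (walk_end (src e) w) (fun _ => 1)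
   else 0) :> R.
Proof.
move=> -> size_w w_e.
pose walks3 s1 s3 := walk_from v (s1 ++ w ++ s3).
have -> : (#|[set g in paths_from src tgt v (a + (m + a)) | take m (drop a (tval g)) == w]|)%:R
    = sum_tuples a (fun s1 => sum_tuples a (fun s3 => (walks3 s1 s3)%:R)) :> R.
  rewrite -sumr_const big_mkcond /=.
  rewrite (eq_bigr (fun g : (a + (m + a)).-tuple E =>
    (walk_from v g && (take m (drop a g) == w))%:R)) => [|g _]; last first.
    by rewrite inE paths_from_walk; case: andP.
  rewrite -[LHS]/(sum_tuples (a + (m + a))
    (fun g => (walk_from v g && (take m (drop a g) == w))%:R)) !sum_tuples_cat.
  apply: eq_sum_tuples => s1 size_s1.
  rewrite -(sum_tuples_delta
    (fun s2 => sum_tuples a (fun s3 => (walk_from v (s1 ++ s2 ++ s3))%:R)) size_w).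
  rewrite sum_tuples_cat; apply: eq_sum_tuples => s2 size_s2.
  case: eqP => [->|ne_s2].
    by apply: eq_sum_tuples => s3 _; rewrite drop_size_cat // take_size_cat // eqxx andbT.
  apply: sum_tuples_eq0 => s3 _.
  by rewrite drop_size_cat // take_size_cat // (introF eqP ne_s2) andbF.
have walks3E s1 s3 : walks3 s1 s3 = [&& walk_from v s1, walk_end v s1 == src e,
    is_path src tgt w & walk_from (walk_end (src e) w) s3].
  have from_w j : walk_from j w = (src e == j) && is_path src tgt w.
    by rewrite w_e walk_from_cons.
  have end_w j : walk_end j w = walk_end (src e) w by rewrite w_e.
  by rewrite /walks3 !walk_from_cat from_w end_w eq_sym !andbA.
case path_w: (is_path src tgt w); last first.
  apply: sum_tuples_eq0 => s1 _; apply: sum_tuples_eq0 => s3 _.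
  by rewrite walks3E path_w !andbF.
rewrite /walk_sum /sum_tuples mulr_suml; apply: eq_bigr => s1 _.
rewrite mulr_sumr; apply: eq_bigr => s3 _; rewrite walks3E path_w.
by case: (walk_from v s1); case: eqP; case: walk_from; rewrite ?mulr1 ?mulr0 ?mul0r.
Qed.

(** Paths of positive length are walks from their (unique) start vertex. *)
Lemma count_paths (R : pzSemiRingType) m :
  (0 < m)%N ->
  \sum_(w : m.-tuple E) (is_path src tgt w)%:R = \sum_i walk_sum m i (fun _ => 1) :> R.
Proof.
move=> m_gt0; rewrite /walk_sum /sum_tuples exchange_big; apply: eq_bigr => w _.
case: w => [[|e s] size_s]; first by rewrite -(eqP size_s) in m_gt0.
rewrite (bigD1 (src e)) //= -/(walk_from _ (e :: s)) walk_from_cons eqxx.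
rewrite big1 ?addr0 => [|i ne_i].
  by rewrite /is_path /=; case: path.
by rewrite -/(walk_from _ (e :: s)) walk_from_cons eq_sym (negbTE ne_i).
Qed.

End WalkSums.

Lemma cvg_big_sum (R : realType) (I : Type) (r : seq I) (P : pred I)
    (f : I -> nat -> R) (l : I -> R) :
  (forall i, P i -> f i n @[n --> \oo] --> l i) ->
  \sum_(i <- r | P i) f i n @[n --> \oo] --> \sum_(i <- r | P i) l i.
Proof.
move=> f_l; elim: r => [|i r IH].
  by rewrite big_nil; under eq_cvg do rewrite big_nil; apply: cvg_cst.
rewrite big_cons; under eq_cvg do rewrite big_cons.
by case Pi: (P i) => //; apply: cvgD (f_l _ Pi) IH.
Qed.

Lemma submul_geometric (R : numDomainType) (T : nat -> R) N :
  (forall n, 0 <= T n) -> (forall n, T (N + n) <= T N * T n) ->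
  forall q, T (q * N)%N <= T 0%N * T N ^+ q.
Proof.
move=> T_ge0 T_submul; elim=> [|q IH]; first by rewrite mul0n expr0 mulr1.
rewrite mulSn exprS mulrCA; apply: le_trans (T_submul _) _.
exact: ler_wpM2l.
Qed.

Section NormalizedWalkCounts.
Variables (R : realType) (k : nat) (E : finType) (src tgt : E -> 'I_k).
Variables (lam : R) (rho : 'I_k -> R).
Hypothesis lam_gt0 : 0 < lam.
Hypothesis rho_lim :
  forall i, (fun n => walk_sum src tgt n i (fun _ => 1) / lam ^+ n) @ \oo --> rho i.
Local Notation walk_end := (walk_end tgt).

Lemma rho_ge0 i : 0 <= rho i.
Proof.
apply: (cvgr_to_ge (@rho_lim i)); apply: nearW => n.
by rewrite divr_ge0 ?exprn_ge0 ?(ltW lam_gt0) ?walk_sum_ge0.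
Qed.

Lemma rho_eigen i : rho i * lam = \sum_(e | src e == i) rho (tgt e).
Proof.
have lim_next : (fun n => walk_sum src tgt n.+1 i (fun _ => 1) / lam ^+ n.+1) @ \oo -->
    (\sum_(e | src e == i) rho (tgt e)) / lam.
  under eq_cvg => n.
    rewrite walk_sumS exprSr invfM mulrA mulr_suml.
    over.
  by apply: cvgM (cvg_cst _); apply: cvg_big_sum => e _; apply: rho_lim.
have := @rho_lim i; rewrite -cvg_shiftS => /(cvg_unique (@Rhausdorff R))/(_ lim_next) ->.
by rewrite divfK // gt_eqF.
Qed.

Lemma rho_zero_closed e : rho (src e) = 0 -> rho (tgt e) = 0.
Proof.
move=> rho_src0; have := rho_eigen (src e); rewrite rho_src0 mul0r.
by move=> /esym/psumr_eq0P/(_ e (eqxx _)); apply=> e' _; apply: rho_ge0.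
Qed.

Lemma markov_telescope s i : walk_from src tgt i s ->
  rho i * \prod_(e <- s) (rho (tgt e) / (lam * rho (src e))) =
  rho (walk_end i s) / lam ^+ size s.
Proof.
elim: s i => [|e s IH] i /=; first by rewrite big_nil mulr1 expr0 divr1.
move=> /andP[/eqP <- walk_s]; rewrite big_cons.
have [rho_src0|rho_src_neq0] := eqVneq (rho (src e)) 0.
  have /eqP rho_end0 : rho (walk_end (tgt e) s) == 0.
    apply: (walk_end_closed (P := fun j => rho j == 0) _ walk_s).
      by move=> e' /eqP/rho_zero_closed ->.
    by rewrite rho_zero_closed.
  by rewrite rho_src0 rho_end0 !mul0r.
rewrite exprS [in RHS]invfM [RHS]mulrCA -IH //; field.
by rewrite rho_src_neq0 gt_eqF.
Qed.

Lemma markov_law_endpoints (u : 'I_k -> R) v0 m (w : m.-tuple E) e w' :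
  tval w = e :: w' ->
  markov_law src tgt lam (fun i => u i * rho i / rho v0) rho w =
  if is_path src tgt w then u (src e) / rho v0 * rho (walk_end (src e) w) / lam ^+ m
  else 0.
Proof.
move=> w_e; rewrite /markov_law w_e; case path_w: is_path => //.
have walk_w : walk_from src tgt (src e) (e :: w') by rewrite walk_from_cons eqxx path_w.
have -> : m = size (e :: w') by rewrite -(size_tuple w) w_e.
rewrite -[RHS]mulrA -(markov_telescope walk_w); ring.
Qed.

Lemma zero_set_decay : exists N C, (0 < N)%N /\
  forall i q, rho i = 0 -> walk_sum src tgt (q * N) i (fun _ => 1) <= C * (lam ^+ N / 2) ^+ q.
Proof.
pose T n := \sum_(j | rho j == 0) walk_sum src tgt n j (fun _ => 1) / lam ^+ n.
have T_ge0 n : 0 <= T n.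
  by apply: sumr_ge0 => j _; rewrite divr_ge0 ?exprn_ge0 ?(ltW lam_gt0) ?walk_sum_ge0.
have T_cvg0 : T @ \oo --> (0 : R).
  have -> : (0 : R) = \sum_(j | rho j == 0) rho j by rewrite big1 // => j /eqP.
  by apply: cvg_big_sum => j _; apply: rho_lim.
have T_submul N n : T (N + n) <= T N * T n.
  rewrite /T mulr_suml; apply: ler_sum => i /eqP rho_i0.
  rewrite -mulr_suml exprD invfM mulrACA ler_pM2r ?mulr_gt0 ?invr_gt0 ?exprn_gt0 //.
  apply: walk_sum_submul => [e /eqP|]; last exact/eqP.
  by move/rho_zero_closed => ->.
have [N [N_gt0 TN_small]] : exists N, (0 < N)%N /\ T N <= 2^-1.
  have : \forall n \near \oo, (0 < n)%N /\ T n <= 2^-1.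
    near=> n; split; first by near: n; apply: nbhs_infty_gt.
    by rewrite -[T n]ger0_norm //; apply/ltW; near: n; apply: cvgr0_norm_lt T_cvg0 _ _.
  by case=> n0 _ /(_ n0 (leqnn n0)); exists n0.
exists N, (T 0%N); split=> // i q rho_i0.
have walk_le_T n : walk_sum src tgt n i (fun _ => 1) <= lam ^+ n * T n.
  rewrite -ler_pdivrMl ?exprn_gt0 // mulrC /T (bigD1 i) ?rho_i0 //= lerDl.
  by apply: sumr_ge0 => j _; rewrite divr_ge0 ?exprn_ge0 ?(ltW lam_gt0) ?walk_sum_ge0.
apply: (le_trans (walk_le_T _)).
rewrite exprMn -exprM [(N * q)%N]mulnC mulrCA ler_wpM2l ?exprn_ge0 ?(ltW lam_gt0) //.
apply: le_trans (submul_geometric T_ge0 (T_submul N) q) _.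
by rewrite ler_wpM2l // lerXn2r ?nnegrE ?invr_ge0 ?ler0n.
Unshelve. all: end_near.
Qed.

End NormalizedWalkCounts.

Lemma large_growth_lower (R : realType) (k : nat) (E : finType) (src tgt : E -> 'I_k)
    (lam : R) v b :
  1 < lam -> large_growth src tgt lam v -> 1 < b ->
  \forall n \near \oo, lam ^+ n <= (#|paths_from src tgt v n|)%:R * b ^+ n.
Proof.
move=> lam_gt1 [f [f_o card_eq]] b_gt1.
have ln_lam_gt0 : 0 < ln lam by rewrite ln_gt0.
have ln_b_gt0 : 0 < ln b by rewrite ln_gt0.
have expR_ln x n : 0 < x -> x ^+ n = expR (n%:R * ln x).
  by move=> x_gt0; rewrite expRM_natl lnK ?posrE.
near=> n.
have n_gt0 : (0 < n%:R :> R) by rewrite ltr0n; near: n; apply: nbhs_infty_gt.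
have f_small : - (ln b / ln lam) < f n / n%:R.
  have : `|f n / n%:R| < ln b / ln lam.
    by near: n; apply: cvgr0_norm_lt f_o _ _; rewrite divr_gt0.
  by rewrite ltr_norml => /andP[].
have f_bound : - (n%:R * ln b) <= f n * ln lam.
  have -> : - (n%:R * ln b) = - (ln b / ln lam) * n%:R * ln lam.
    by field; rewrite gt_eqF.
  by rewrite ler_pM2r // ltW // -ltr_pdivlMr.
have -> : (#|paths_from src tgt v n|)%:R = expR ((n%:R + f n) * ln lam).
  by near: n; apply: filterS card_eq => n ->; rewrite /powR gt_eqF // (lt_trans ltr01).
rewrite !expR_ln ?(lt_trans ltr01) // -expRD ler_expR; lra.
Unshelve. all: end_near.
Qed.

(** The initial vertex has positive normalized growth: otherwise all walks
    from [v0] stay in the zero set of [rho], where they grow exponentially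
    slower than [lam], contradicting large growth. *)
Lemma rho_start_neq0 (R : realType) (k : nat) (E : finType) (src tgt : E -> 'I_k)
    (lam : R) (rho : 'I_k -> R) v0 :
  1 < lam -> large_growth src tgt lam v0 ->
  (forall i, (fun n => walk_sum src tgt n i (fun _ => 1) / lam ^+ n) @ \oo --> rho i) ->
  rho v0 != 0.
Proof.
move=> lam_gt1 growth rho_lim; apply/eqP => rho_v0.
have lam_gt0 : 0 < lam by apply: lt_trans lam_gt1.
have [N [C [N_gt0 decay]]] := zero_set_decay lam_gt0 rho_lim.
pose b := expR (ln 2 / (2 * N%:R)) : R.
have b_gt1 : 1 < b by rewrite expR_gt1 divr_gt0 ?ln_gt0 ?mulr_gt0 ?ltr0n ?ltr1n.
pose c := b ^+ N / 2.
have c_ge0 : 0 <= c by rewrite divr_ge0 ?exprn_ge0 ?ler0n // ltW // (lt_trans ltr01).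
have c_lt1 : c < 1.
  rewrite /c; have -> : b ^+ N = expR (ln 2 / 2).
    by rewrite /b -expRM_natl; congr expR; field; rewrite pnatr_eq0 -lt0n.
  rewrite ltr_pdivrMr ?ltr0n // mul1r -[X in _ < X]lnK ?posrE ?ltr0n // ltr_expR.
  by rewrite ltr_pdivrMr ?ltr0n // ltr_pMr ?ln_gt0 ?ltr1n.
have small : \forall q \near \oo, C * c ^+ q < 1.
  have lim0 : (fun q => C * c ^+ q) @ \oo --> (0 : R).
    by rewrite -(mulr0 C); apply: cvgM (cvg_cst _) (cvg_expr _); rewrite ger0_norm.
  near=> q; apply: le_lt_trans (ler_norm _) _; near: q.
  by apply: cvgr0_norm_lt lim0 _ _.
have [q0 _ lower] := large_growth_lower lam_gt1 growth b_gt1.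
have [q [q_ge q_small]] : exists q, (q0 <= q * N)%N /\ C * c ^+ q < 1.
  case: small => q1 _ q1_small; exists (maxn q0 q1); split; last exact/q1_small/leq_maxr.
  by apply: leq_trans (leq_pmulr _ N_gt0); apply: leq_maxl.
have : lam ^+ (q * N) <= lam ^+ (q * N) * (C * c ^+ q).
  apply: le_trans (lower _ q_ge) _; rewrite card_paths_from.
  apply: le_trans (ler_wpM2r _ (decay v0 q rho_v0)) _.
    by rewrite exprn_ge0 // ltW // (lt_trans ltr01).
  rewrite /c !exprMn -!exprM [(N * q)%N]mulnC le_eqVlt; apply/orP; left; apply/eqP; ring.
by rewrite ler_pMr ?exprn_gt0 // leNgt q_small.
Unshelve. all: end_near.
Qed.

Lemma floor_log_cvg (R : realType) : floor_log R n @[n --> \oo] --> \oo.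
Proof.
apply/cvgnyPge => A; near=> n.
have n_ge : expR A%:R <= (n%:R : R) by near: n; apply: nbhs_infty_ger.
have A_le : (A%:R : R) <= ln (n%:R : R).
  by rewrite -[X in X <= _]expRK ler_ln // posrE ?(lt_le_trans (expR_gt0 _) n_ge) ?expR_gt0.
by rewrite /floor_log truncn_ge_nat // (le_trans _ A_le).
Unshelve. all: end_near.
Qed.

Lemma floor_log_small (R : realType) : \forall n \near \oo, (2 * floor_log R n < n)%N.
Proof.
near=> n.
have n_ge16 : (16 : R) <= n%:R by rewrite (ler_nat R 16 n); near: n; apply: nbhs_infty_ge.
have ln_split : ln (n%:R : R) = ln 4 + ln (n%:R / 4).
  by rewrite -lnM ?posrE ?divr_gt0 ?(lt_le_trans _ n_ge16) // mulrC divfK.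
have ln4_lt : ln (4 : R) < 4 by apply: ln_sublinear.
have ln_n4_lt : ln (n%:R / 4 : R) < n%:R / 4 by apply: ln_sublinear; rewrite divr_gt0 //; lra.
have ln_ge0 : 0 <= ln (n%:R : R) by apply: ln_ge0; lra.
rewrite -(ltr_nat R) natrM; apply: (le_lt_trans (y := 2 * ln (n%:R : R))); last lra.
by rewrite ler_pM2l // truncn_le.
Unshelve. all: end_near.
Qed.

Lemma tv_dist_le_l1 (R : realType) (T : finType) (p q : T -> R) :
  tv_dist p q <= \sum_x `|p x - q x|.
Proof.
apply: bigmax_le => [|A _]; first by apply: sumr_ge0.
rewrite -sumrB (le_trans (ler_norm_sum _ _ _)) //.
by rewrite [X in _ <= X](bigID (mem A)) /= lerDl sumr_ge0.
Qed.

Lemma tv_dist_ge0 (R : realType) (T : finType) (p q : T -> R) : 0 <= tv_dist p q.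
Proof. by apply: (big_ind (fun x => 0 <= x)) => // x y x_ge0 _; rewrite le_max x_ge0. Qed.

Section Comparison.
Variables (R : realType) (k : nat) (E : finType) (src tgt : E -> 'I_k).
Variables (lam : R) (rho u : 'I_k -> R) (v0 : 'I_k).
Hypothesis lam_gt0 : 0 < lam.
Hypothesis rho_lim :
  forall i, (fun n => walk_sum src tgt n i (fun _ => 1) / lam ^+ n) @ \oo --> rho i.

Lemma subpath_law_endpoints n a (w : (n - 2 * a).-tuple E) e w' :
  (2 * a <= n)%N -> tval w = e :: w' ->
  subpath_law R src tgt v0 w =
  (if is_path src tgt w then
     walk_sum src tgt a v0 (fun j => (j == src e)%:R) *
     walk_sum src tgt a (walk_end tgt (src e) w) (fun _ => 1)
   else 0) / walk_sum src tgt n v0 (fun _ => 1).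
Proof.
move=> a_le w_e; rewrite /subpath_law card_paths_from; congr (_ / _).
by apply: card_subpaths (size_tuple w) w_e; lia.
Qed.

Definition discrepancy (n a : nat) : R :=
  \sum_s \sum_t `| u s / rho v0 * rho t -
     (walk_sum src tgt a v0 (fun j => (j == s)%:R) / lam ^+ a) *
     (walk_sum src tgt a t (fun _ => 1) / lam ^+ a) /
     (walk_sum src tgt n v0 (fun _ => 1) / lam ^+ n) |.

Lemma markov_subpath_diff n a (w : (n - 2 * a).-tuple E) :
  (2 * a < n)%N ->
  `| markov_law src tgt lam (fun i => u i * rho i / rho v0) rho w -
     subpath_law R src tgt v0 w |
  <= (is_path src tgt w)%:R * (discrepancy n a / lam ^+ (n - 2 * a)).
Proof.
move=> a_lt; set m := (n - 2 * a)%N.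
case w_e: (tval w) => [|e w']; first by move: (size_tuple w); rewrite w_e /= /m; lia.
rewrite (markov_law_endpoints lam_gt0 rho_lim _ _ w_e).
rewrite (subpath_law_endpoints (ltnW a_lt) w_e).
rewrite w_e; case: is_path; last by rewrite mul0r subr0 normr0 mul0r.
set s := src e; set t := walk_end tgt s (e :: w').
set A := walk_sum _ _ a v0 _; set B := walk_sum _ _ a t _; set C := walk_sum _ _ n v0 _.
have rescale : A * B / C = A / lam ^+ a * (B / lam ^+ a) / (C / lam ^+ n) / lam ^+ m.
  have [->|C_neq0] := eqVneq C 0; first by rewrite !mul0r invr0 !mulr0 mul0r.
  have -> : lam ^+ n = lam ^+ a * (lam ^+ m * lam ^+ a).
    by rewrite -!exprD /m; congr (_ ^+ _); lia.
  by field; rewrite C_neq0 !expf_neq0 // gt_eqF.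
rewrite rescale -mulrBl normrM [`|_^-1|]ger0_norm ?invr_ge0 ?exprn_ge0 ?(ltW lam_gt0) //.
rewrite mulr1n mul1r ler_wpM2r ?invr_ge0 ?exprn_ge0 ?(ltW lam_gt0) //.
rewrite /discrepancy (bigD1 s) //= (bigD1 t) //= -addrA lerDl.
by apply: addr_ge0; apply: sumr_ge0 => // s' _; apply: sumr_ge0.
Qed.

Lemma tv_le_discrepancy n a :
  (2 * a < n)%N ->
  tv_dist (markov_law src tgt lam (fun i => u i * rho i / rho v0) rho (m := n - 2 * a))
          (subpath_law R src tgt v0 (n := n) (a := a))
  <= discrepancy n a *
     \sum_i walk_sum src tgt (n - 2 * a) i (fun _ => 1) / lam ^+ (n - 2 * a).
Proof.
move=> a_lt; apply: le_trans (tv_dist_le_l1 _ _) _.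
apply: le_trans (ler_sum _ (fun w _ => markov_subpath_diff w a_lt)) _.
rewrite -[X in X <= _]mulr_suml count_paths; last by lia.
by rewrite -mulr_suml mulrCA.
Qed.

End Comparison.

Lemma discrepancy_cvg0 (R : realType) (k : nat) (E : finType) (src tgt : E -> 'I_k)
    (lam : R) (rho u : 'I_k -> R) (v0 : 'I_k) :
  rho v0 != 0 ->
  (forall i, (fun n => walk_sum src tgt n i (fun _ => 1) / lam ^+ n) @ \oo --> rho i) ->
  (forall i, (fun n => walk_sum src tgt n v0 (fun j => (j == i)%:R) / lam ^+ n) @ \oo --> u i) ->
  discrepancy src tgt lam rho u v0 n (floor_log R n) @[n --> \oo] --> (0 : R).
Proof.
move=> rho_v0 rho_lim u_lim.
have -> : (0 : R) = \sum_(s : 'I_k) \sum_(t : 'I_k) 0 by rewrite big1 // => s _; rewrite big1.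
apply: cvg_big_sum => s _; apply: cvg_big_sum => t _.
have ratio_lim : (fun n =>
    walk_sum src tgt (floor_log R n) v0 (fun j => (j == s)%:R) / lam ^+ floor_log R n *
    (walk_sum src tgt (floor_log R n) t (fun _ => 1) / lam ^+ floor_log R n) /
    (walk_sum src tgt n v0 (fun _ => 1) / lam ^+ n)) @ \oo --> u s / rho v0 * rho t.
  rewrite mulrAC; apply: cvgM; last exact: cvgV (rho_lim v0).
  by apply: cvgM; [have := u_lim s | have := rho_lim t]; apply: cvg_comp (floor_log_cvg R).
rewrite -(@normr0 _ R) -(subrr (u s / rho v0 * rho t)).
exact: cvg_norm (cvgB (cvg_cst _) ratio_lim).
Qed.

Unset Implicit Arguments.

Theorem lemma6p1 (R : realType) (k : nat) (E : finType) (src tgt : E -> 'I_k)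
  (lam : R) (v0 : 'I_k) (rho u : 'I_k -> R) :
  let M := trans_mxR R src tgt in
  semisimple M lam ->
  1 < lam ->
  large_growth src tgt lam v0 ->
  (forall i, (fun n => (M ^+ n *m (const_mx 1 : 'M[R]_(k, 1))) i (ord0 : 'I_1) / lam ^+ n) @ \oo --> rho i) ->
  (forall i, (fun n => (M ^+ n) v0 i / lam ^+ n) @ \oo --> u i) ->
  let pi := fun i => u i * rho i / rho v0 in
  (fun n : nat =>
     tv_dist (markov_law src tgt lam pi rho (m := n - 2 * floor_log R n))
             (subpath_law R src tgt v0 (n := n) (a := floor_log R n)))
    @ \oo --> (0 : R).
Proof.
move=> M _ lam_gt1 growth rho_lim_mx u_lim_mx pi.
have lam_gt0 : 0 < lam by apply: lt_trans lam_gt1.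
have rho_lim i : (fun n => walk_sum src tgt n i (fun _ => 1) / lam ^+ n) @ \oo --> rho i.
  by under eq_cvg do rewrite -mx_row_sum_walk; apply: rho_lim_mx.
have u_lim i :
    (fun n => walk_sum src tgt n v0 (fun j => (j == i)%:R) / lam ^+ n) @ \oo --> u i.
  by under eq_cvg do rewrite -mx_entry_walk; apply: u_lim_mx.
have rho_v0 := rho_start_neq0 lam_gt1 growth rho_lim.
have [K [_ K_bound]] : bounded_fun
    (fun n => \sum_i walk_sum src tgt n i (fun _ => 1) / lam ^+ n).
  by apply/cvg_seq_bounded/cvgP; apply: cvg_big_sum => i _; apply: rho_lim.
apply: (@squeeze_cvgr _ _ _ _ (fun=> 0)
  (fun n => discrepancy src tgt lam rho u v0 n (floor_log R n) * (K + 1))); last 2 first.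
- exact: cvg_cst.
- by rewrite -(mul0r (K + 1)); apply: cvgM (discrepancy_cvg0 rho_v0 rho_lim u_lim) (cvg_cst _).
near=> n; apply/andP; split; first exact: tv_dist_ge0.
have a_lt : (2 * floor_log R n < n)%N by near: n; apply: floor_log_small.
apply: le_trans (tv_le_discrepancy u v0 lam_gt0 rho_lim a_lt) _.
apply: ler_wpM2l; first by apply: sumr_ge0 => s _; apply: sumr_ge0.
have K_lt : K < K + 1 by rewrite ltrDl.
exact: le_trans (ler_norm _) (K_bound _ K_lt _ I).
Unshelve. all: end_near.
Qed.
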